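(* Let $w$ be a weight on $\mathbb{T}$ with $w>0$ a.e. and $w,w^{-1}\in BMO(\mathbb{T})$, let $n\ge1$ and write $\Phi_n^*=\Phi_n^*(z,w)$. Then for every $j=1,2,\dots$, \[ w^jP_{[1,n]}\Phi_n^*=\sum_{l=1}^{j}\binom{j-1}{l-1}{\bf C}_l\, w^{j-l}\Phi_n^* \] and \[ w^{-j}P_{[1,n]}\Phi_n^*=-\sum_{l=0}^{j}\binom{j}{l}\widetilde{\bf C}_{l+1}\, w^{-(j-l)}(w\Phi_n^* ). \]
   Context: $P_{[i,j]}$ denotes the orthogonal projection in $L^2(\mathbb{T},d\theta)$ onto the span of $e^{ik\theta}$, $i\le k\le j$. A function is identified with the operator of multiplication by it, and $[A,B]=AB-BA$. Define ${\bf C}_0=P_{[1,n]}$, ${\bf C}_l=[w,{\bf C}_{l-1}]$ for $l\ge1$, and $\widetilde{\bf C}_0=P_{[1,n]}$, $\widetilde{\bf C}_l=[w^{-1},\widetilde{\bf C}_{l-1}]$ for $l\ge1$. $\Phi_n(z,w)$ is the monic degree-$n$ polynomial orthogonal in $L^2(w\,d\theta)$ to lower-degree polynomials, and for $Q_n(z)=q_nz^n+\dots+q_0$, $Q_n^*(z)=\bar q_0z^n+\dots+\bar q_n$. *)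

From HB Require Import structures.
From mathcomp Require Import all_boot all_order all_algebra.
From mathcomp Require Import all_classical all_reals all_analysis.
From mathcomp Require Import complex.
Set Implicit Arguments. Unset Strict Implicit. Unset Printing Implicit Defensive.
Import Order.TTheory GRing.Theory Num.Theory.
Local Open Scope ring_scope.
Local Open Scope classical_set_scope.
Local Open Scope complex_scope.

(* The circle T is modelled by [0, 2 pi]; functions on T are 2pi-periodic
   functions R -> R (real) or R -> R[i] (complex). *)
Definition circ_dom (R : realType) : set R := `[0%R, (2 * pi)%R].

Definition periodic2pi (R : realType) (T : Type) (f : R -> T) : Prop :=
  forall x : R, f (x + 2 * pi)%R = f x.

Definition cint (R : realType) (D : set R) (f : R -> R[i]) : R[i] :=
  Complex (Rintegral (@lebesgue_measure R) D (fun x => @complex.Re R (f x)))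
          (Rintegral (@lebesgue_measure R) D (fun x => @complex.Im R (f x))).

Definition eit (R : realType) (t : R) : R[i] := Complex (cos t) (sin t).

Definition fourier_coef (R : realType) (f : R -> R[i]) (k : int) : R[i] :=
  ((2 * pi)^-1)%:C * cint (@circ_dom R) (fun t => f t * eit (- (k%:~R * t))).

(* P_{[a,b]} : projection onto span{ e^{ik t} : a <= k <= b } *)
Definition ProjF (R : realType) (a b : int) (f : R -> R[i]) : R -> R[i] :=
  fun t => \sum_(k <- [seq (a + m%:Z)%R | m <- iota 0 `|(b - a + 1)%R|%N])
             fourier_coef f k * eit (k%:~R * t).

Definition mulop (R : realType) (g : R -> R) (f : R -> R[i]) : R -> R[i] :=
  fun t => (g t)%:C * f t.

Definition op (R : realType) := (R -> R[i]) -> (R -> R[i]).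

Definition commop (R : realType) (A B : op R) : op R :=
  fun f t => A (B f) t - B (A f) t.

Fixpoint Cop (R : realType) (w : R -> R) (n : nat) (l : nat) : op R :=
  match l with
  | 0 => ProjF 1 n
  | l'.+1 => commop (mulop w) (Cop w n l')
  end.

Definition Ctil (R : realType) (w : R -> R) (n : nat) (l : nat) : op R :=
  Cop (fun x => (w x)^-1) n l.

Definition polystar (R : realType) (n : nat) (Q : {poly R[i]}) : {poly R[i]} :=
  \poly_(k < n.+1) conjc (Q`_(n - k)).

Definition is_weight (R : realType) (w : R -> R) : Prop :=
  periodic2pi w /\
  (@lebesgue_measure R).-integrable (@circ_dom R) (fun x => (w x)%:E) /\
  {ae @lebesgue_measure R, forall x, circ_dom x -> (0 < w x)%R}.

Definition avgI (R : realType) (a b : R) (f : R -> R) : R :=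
  (b - a)^-1 * Rintegral (@lebesgue_measure R) `[a, b] f.

Definition is_BMO_T (R : realType) (f : R -> R) : Prop :=
  periodic2pi f /\
  (@lebesgue_measure R).-integrable (@circ_dom R) (fun x => (f x)%:E) /\
  exists M : R, forall a b : R, (a < b)%R -> (b <= a + 2 * pi)%R ->
    ((b - a)^-1 * Rintegral (@lebesgue_measure R) `[a, b]
        (fun x => `|f x - avgI a b f|) <= M)%R.

Definition is_OPUC (R : realType) (w : R -> R) (n : nat) (Phi : {poly R[i]}) : Prop :=
  Phi \is monic /\ size Phi = n.+1 /\
  forall k : nat, (k < n)%N ->
    cint (@circ_dom R) (fun t => Phi.[eit t] * conjc (eit (k%:R * t)) * (w t)%:C) = 0.

From HB Require Import structures.
From mathcomp Require Import all_boot all_order all_algebra.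
From mathcomp Require Import all_classical all_reals all_analysis.
From mathcomp Require Import complex ring zify measurable_realfun.
Import Order.TTheory GRing.Theory Num.Theory.
Local Open Scope ring_scope.
Local Open Scope classical_set_scope.
Local Open Scope complex_scope.

(* Both identities are the binomial expansion of [u^k A] in the iterated
   commutators [ad_u^m A], with [u = w], [A = C_1], resp. [u = w^-1],
   [A = C~_1].  Orthogonality of [Phi_n] says exactly that
   [P_[1,n] (w Phi_n^* ) = 0]: the Fourier coefficient of [w Phi_n^*] at
   [k in [1, n]] is the conjugate of the inner product of [Phi_n] with
   [z^(n-k)].  Hence [C_1 Phi_n^* = w P_[1,n] Phi_n^*] and, as [w^-1 w = 1]
   a.e., [C~_1 (w Phi_n^* ) = - P_[1,n] Phi_n^*].  The identities hold at
   every point. *)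

Lemma sum_binomial_pascal (S : pzSemiRingType) (k : nat) (A : nat -> S) :
  \sum_(0 <= m < k.+2) 'C(k.+1, m)%:R * A m =
  \sum_(0 <= m < k.+1) 'C(k, m)%:R * (A m.+1 + A m).
Proof.
under [RHS]eq_bigr do rewrite mulrDr.
rewrite big_split /= big_nat_recl // bin0 addrC.
under eq_bigr do rewrite binS natrD mulrDl.
rewrite big_split /= addrA; congr (_ + _).
rewrite [RHS]big_nat_recl // big_nat_recr //=.
by rewrite bin_small // mul0r addr0 bin0.
Qed.

Lemma mulop_mulopX (R : realType) (u : R -> R) (i : nat) (g : R -> R[i]) :
  mulop u (mulop (fun x => u x ^+ i) g) = mulop (fun x => u x ^+ i.+1) g.
Proof. by apply/funext => t; rewrite /mulop exprS rmorphM mulrA. Qed.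

Lemma mulopX_commop_expansion (R : realType) (u : R -> R) (X : nat -> op R) :
  (forall m, X m.+1 = commop (mulop u) (X m)) ->
  forall k g t, mulop (fun x => u x ^+ k) (X 0%N g) t =
    \sum_(0 <= m < k.+1) 'C(k, m)%:R * X m (mulop (fun x => u x ^+ (k - m)) g) t.
Proof.
move=> XS; elim=> [|k IHk] g t.
  rewrite big_nat1 bin0 mul1r subnn.
  by rewrite /mulop expr0 mul1r; congr (X 0%N _ t); apply/funext => x; rewrite expr0 mul1r.
rewrite sum_binomial_pascal -(@mulop_mulopX _ u k) [LHS]/mulop IHk mulr_sumr.
rewrite !big_nat; apply: eq_bigr => m /andP[_ lemk].
rewrite mulrCA XS subSS subSn // -mulop_mulopX.
by rewrite /commop subrK.
Qed.

Section CircleFourier.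
Variable R : realType.
Implicit Types (a b t : R) (P : {poly R[i]}) (f : R -> R) (F : R -> R[i]).

Lemma eitD a b : eit (a + b) = eit a * eit b.
Proof. by rewrite /eit cosD sinD; congr Complex; ring. Qed.

Lemma eit_mulN a : eit a * eit (- a) = 1.
Proof. by rewrite -eitD subrr /eit cos0 sin0. Qed.

Lemma eit_natmul (m : nat) t : eit (m%:R * t) = eit t ^+ m.
Proof.
elim: m => [|m IHm]; first by rewrite mul0r -(subrr 0) eitD eit_mulN.
by rewrite -addn1 natrD mulrDl mul1r eitD IHm exprD expr1.
Qed.

Lemma conjcM (x y : R[i]) : conjc (x * y) = conjc x * conjc y.
Proof. exact: rmorphM. Qed.

Lemma conjc_eit a : conjc (eit a) = eit (- a).
Proof. by rewrite /eit cosN sinN. Qed.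

Lemma horner_polystar n P x : (size P <= n.+1)%N -> x * conjc x = 1 ->
  (polystar n P).[x] = x ^+ n * conjc P.[x].
Proof.
move=> szP xJx; rewrite horner_poly (horner_coef_wide _ szP) rmorph_sum mulr_sumr.
rewrite (reindex_inj rev_ord_inj); apply: eq_bigr => i _ /=.
have lein : (i <= n)%N by rewrite -ltnS.
rewrite subSS subKn // rmorphM rmorphXn mulrCA.
have -> : x ^+ n = x ^+ (n - i) * x ^+ i by rewrite -exprD subnK.
by rewrite -mulrA -exprMn xJx expr1n mulr1.
Qed.

Lemma RintegralN (D : set R) f :
  Rintegral (@lebesgue_measure R) D (fun x => - f x) =
  - Rintegral (@lebesgue_measure R) D f.
Proof.
rewrite /Rintegral (_ : (fun x => (- f x)%:E) = (fun x => - (f x)%:E)%E); last first.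
  by apply/funext => x; rewrite EFinN.
rewrite [in LHS]integralE [in RHS]integralE funeposN funenegN.
by case: (integral _ _ _) => [a||]; case: (integral _ _ _) => [b||] //=;
  rewrite ?opprB ?oppr0.
Qed.

Lemma cint_conjc (D : set R) F : cint D (fun t => conjc (F t)) = conjc (cint D F).
Proof.
rewrite /cint /= -RintegralN.
by congr Complex; congr Rintegral; apply/funext => x; case: (F x).
Qed.

Lemma mulop_polystar_eit (w : R -> R) n P (k : nat) t :
  (size P <= n.+1)%N -> (k <= n)%N ->
  mulop w (fun t => (polystar n P).[eit t]) t * eit (- (k%:R * t)) =
  conjc (P.[eit t] * conjc (eit ((n - k)%:R * t)) * (w t)%:C).
Proof.
move=> szP lekn; rewrite /mulop horner_polystar //; last by rewrite conjc_eit eit_mulN.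
have -> : eit t ^+ n = eit ((n - k)%:R * t) * eit (k%:R * t).
  by rewrite !eit_natmul -exprD subnK.
rewrite !conjcM conjcK conjc_real -[RHS]mulr1 -(eit_mulN (k%:R * t)).
ring.
Qed.

Lemma ProjF_mulop_polystar (w : R -> R) n P :
  (size P <= n.+1)%N ->
  (forall k, (k < n)%N ->
    cint (@circ_dom R) (fun t => P.[eit t] * conjc (eit (k%:R * t)) * (w t)%:C) = 0) ->
  forall t, ProjF 1 n (mulop w (fun t => (polystar n P).[eit t])) t = 0.
Proof.
move=> szP P_orth t; rewrite /ProjF big1_seq // => k /andP[_ /mapP[m]].
rewrite mem_iota add0n subrK absz_nat => /andP[_ ltmn] ->.
have -> : (1 + m%:Z)%:~R = m.+1%:R :> R by rewrite -PoszD -pmulrn add1n.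
rewrite /fourier_coef (_ : (fun t => _) = fun t => conjc (P.[eit t] *
  conjc (eit ((n - m.+1)%:R * t)) * (w t)%:C)); last first.
  by apply/funext => s; rewrite mulop_polystar_eit.
rewrite cint_conjc P_orth; last by lia.
by rewrite conjc0 mulr0 mul0r.
Qed.

Lemma horner_eit_mul_eit P a t :
  P.[eit t] * eit (- (a * t)) = \sum_(i < size P) P`_i * eit ((i%:R - a) * t).
Proof.
rewrite horner_coef mulr_suml; apply: eq_bigr => i _.
by rewrite -eit_natmul -mulrA -eitD mulrBl.
Qed.

Lemma measurable_horner_eit P a :
  measurable_fun setT (fun t => complex.Re (P.[eit t] * eit (- (a * t)))) /\
  measurable_fun setT (fun t => complex.Im (P.[eit t] * eit (- (a * t)))).
Proof.
have mcos b : measurable_fun setT (fun t : R => cos (b * t)).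
  apply: measurableT_comp (continuous_measurable_fun (@continuous_cos R)) _.
  exact: mulrl_measurable.
have msin b : measurable_fun setT (fun t : R => sin (b * t)).
  apply: measurableT_comp (continuous_measurable_fun (@continuous_sin R)) _.
  exact: mulrl_measurable.
have meit c b : measurable_fun setT (fun t => complex.Re (c * eit (b * t))) /\
                measurable_fun setT (fun t => complex.Im (c * eit (b * t))).
  by case: c => p q /=; split; [apply: measurable_funB | apply: measurable_funD];
    apply: measurable_funM.
split.
- under eq_fun do rewrite horner_eit_mul_eit (raddf_sum (@complex.Re R : Rcomplex R -> R)).
  by apply: measurable_sum => i; case: (meit P`_i (i%:R - a)).
- under eq_fun do rewrite horner_eit_mul_eit (raddf_sum (@complex.Im R : Rcomplex R -> R)).
  by apply: measurable_sum => i; case: (meit P`_i (i%:R - a)).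
Qed.

Lemma measurable_mulVr : measurable_fun setT (fun x : R => x^-1 * x).
Proof.
rewrite (_ : (fun x => _) = \1_(~` [set 0])).
  by apply: measurable_indic; apply: measurableC; exact: measurable_set1.
apply/funext => x; rewrite indicE.
have [->|x_neq0] := eqVneq x 0; first by rewrite invr0 mul0r memNset //=; apply.
by rewrite mulVf // mem_set //; apply/eqP.
Qed.

Lemma Rintegral_mulVr_ae (D : set R) (w f : R -> R) : measurable D ->
  measurable_fun D w -> {ae @lebesgue_measure R, forall x, D x -> w x != 0} ->
  measurable_fun setT f ->
  Rintegral (@lebesgue_measure R) D (fun t => (w t)^-1 * w t * f t) =
  Rintegral (@lebesgue_measure R) D f.
Proof.
move=> mD mw w_neq0 mf; congr fine; apply: ae_eq_integral => //.
- apply/measurable_EFinP; apply: measurable_funM; last exact: measurable_funS mf.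
  exact: measurableT_comp measurable_mulVr mw.
- by apply/measurable_EFinP; exact: measurable_funS mf.
- apply: (filterS (Filter := ae_filter_ringOfSetsType _)) w_neq0 => x wx_neq0 Dx /=.
  by rewrite mulVf ?mul1r // wx_neq0.
Qed.

Lemma fourier_coef_mulopVK (w : R -> R) P k :
  measurable_fun (@circ_dom R) w ->
  {ae @lebesgue_measure R, forall x, circ_dom x -> w x != 0} ->
  fourier_coef (mulop (fun x => (w x)^-1) (mulop w (fun t => P.[eit t]))) k =
  fourier_coef (fun t => P.[eit t]) k.
Proof.
move=> mw w_neq0; have mD : measurable (@circ_dom R) by exact: measurable_itv.
have [mRe mIm] := measurable_horner_eit P k%:~R.
rewrite /fourier_coef /cint -(Rintegral_mulVr_ae _ _ _ mD mw w_neq0 mRe).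
rewrite -(Rintegral_mulVr_ae _ _ _ mD mw w_neq0 mIm) /mulop.
by congr (_ * Complex _ _); congr Rintegral; apply/funext => t;
  rewrite mulrA -rmorphM -mulrA; case: (_ * eit _) => a b /=; ring.
Qed.

Lemma eq_ProjF (a b : int) F G :
  (forall k, fourier_coef F k = fourier_coef G k) -> ProjF a b F = ProjF a b G.
Proof. by move=> FG; apply/funext => t; apply: eq_bigr => k _; rewrite FG. Qed.

End CircleFourier.

Theorem lemma2p3 (R : realType) (w : R -> R) (n : nat) (Phi : {poly R[i]}) :
  is_weight w -> is_BMO_T w -> is_BMO_T (fun x => (w x)^-1) ->
  (1 <= n)%N -> is_OPUC w n Phi ->
  let Ps : R -> R[i] := fun t => (polystar n Phi).[eit t] in
  forall j : nat, (1 <= j)%N ->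
    {ae @lebesgue_measure R, forall t, circ_dom t ->
      mulop (fun x => w x ^+ j) (ProjF 1 n Ps) t =
      \sum_(1 <= l < j.+1)
         ('C(j.-1, l.-1))%:R * Cop w n l (mulop (fun x => w x ^+ (j - l)) Ps) t}
  /\
    {ae @lebesgue_measure R, forall t, circ_dom t ->
      mulop (fun x => w x ^- j) (ProjF 1 n Ps) t =
      - \sum_(0 <= l < j.+1)
         ('C(j, l))%:R * Ctil w n l.+1 (mulop (fun x => w x ^- (j - l)) (mulop w Ps)) t}.
Proof.
move=> [_ [w_int w_gt0]] _ _ _ [_ [szPhi Phi_orth]] Ps j j_gt0.
have mw : measurable_fun (@circ_dom R) w by move/measurable_int: w_int => /measurable_EFinP.
have ProjF_wPs t : ProjF 1 n (mulop w Ps) t = 0.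
  by apply: ProjF_mulop_polystar Phi_orth t; rewrite szPhi.
have ProjF_VwPs : ProjF 1 n (mulop (fun x => (w x)^-1) (mulop w Ps)) = ProjF 1 n Ps.
  apply: eq_ProjF => k; apply: fourier_coef_mulopVK mw _.
  by apply: (filterS (Filter := ae_filter_ringOfSetsType _)) w_gt0 => x wx_gt0 /wx_gt0 /gt_eqF->.
have C1_Ps : Cop w n 1 Ps = mulop w (ProjF 1 n Ps).
  by apply/funext => t; rewrite /= /commop ProjF_wPs subr0.
have Ctil1_wPs : Ctil w n 1 (mulop w Ps) = fun t => - ProjF 1 n Ps t.
  by apply/funext => t; rewrite /Ctil /= /commop ProjF_VwPs {1}/mulop ProjF_wPs mulr0 sub0r.
have wVX i : (fun x => w x ^- i) = (fun x => (w x)^-1 ^+ i).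
  by apply/funext => x; rewrite exprVn.
split; apply: aeW => t _.
- case: j j_gt0 => // k _; rewrite big_add1 /=.
  under eq_bigr do rewrite subSS.
  rewrite -(@mulopX_commop_expansion _ w (fun m => Cop w n m.+1)) // C1_Ps.
  by rewrite /mulop exprSr rmorphM mulrA.
- under eq_bigr do rewrite wVX.
  rewrite -(@mulopX_commop_expansion _ (fun x => (w x)^-1) (fun m => Ctil w n m.+1)) //.
  by rewrite Ctil1_wPs -wVX /mulop mulrN opprK.
Qed.
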